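(* Let $k\ge 5$ be an integer and let $H$ be a weighted graph with edge weight $\omega:E(H)\to\{3,4,5\}$. If $H$ contains no cycle of odd weight smaller than $2k+1$, then for every $u\in V(H)$ the set $N^{k-3}_\omega[u]$ is weighted bipartite.
   Context: The weight of a subgraph is the sum of the weights of its edges. The weighted distance $d_\omega(x,y)$ is the minimum weight of an $x,y$-path in $H$, and $N^i_\omega[u]=\{x\in V(H): d_\omega(x,u)\le i\}$. A vertex set $S$ is weighted bipartite if the induced subgraph $H[S]$ contains no cycle of odd weight. *)

From mathcomp Require Import all_boot.
Set Implicit Arguments. Unset Strict Implicit. Unset Printing Implicit Defensive.

Section WGraph.
Variables (T : finType) (e : rel T) (w : T -> T -> nat).

Definition simple_graph := symmetric e /\ irreflexive e.
Definition weight_sym := forall x y, e x y -> w x y = w y x.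

Definition seq_weight (s : seq T) : nat :=
  \sum_(p <- zip s (behead s)) w p.1 p.2.

Definition is_cycle (c : seq T) : bool := [&& 3 <= size c, cycle e c & uniq c].

Definition cycle_weight (c : seq T) : nat :=
  \sum_(p <- zip c (rot 1 c)) w p.1 p.2.

Definition is_path (x y : T) (p : seq T) : bool :=
  [&& path e x p, uniq (x :: p) & last x p == y].

(* d_w(x,u) <= i  iff  some x,u-path has weight <= i (d_w is a minimum) *)
Definition wdist_le (x u : T) (i : nat) : Prop :=
  exists p, is_path x u p /\ seq_weight (x :: p) <= i.

Definition in_wball (u : T) (i : nat) (x : T) : Prop := wdist_le x u i.

Definition weighted_bipartite (S : T -> Prop) : Prop :=
  forall c, is_cycle c -> (forall v, v \in c -> S v) -> ~~ odd (cycle_weight c).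
End WGraph.

From mathcomp Require Import all_boot zify.

Set Implicit Arguments. Unset Strict Implicit. Unset Printing Implicit Defensive.

(* For each vertex v of the cycle fix a v,u-walk P_v of weight at most k - 3
   and let pi v be the parity of its weight.  For an edge ab of the cycle, the
   closed walk a -> b -P_b-> u -P_a reversed-> a weighs at most
   5 + 2(k - 3) < 2k + 1.  An odd closed walk contains an odd cycle of no
   larger weight, so this walk is even, i.e. w(ab) = pi a + pi b (mod 2);
   summing around the cycle, its weight is even. *)

Lemma split_not_uniq (T : eqType) (s : seq T) :
  ~~ uniq s -> exists p1 y p2 p3, s = p1 ++ y :: p2 ++ y :: p3.
Proof.
elim: s => [|a s IHs] //=; rewrite negb_and negbK => /orP[/splitPr[p2 p3] | /IHs].
  by exists [::], a, p2, p3.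
by case=> p1 [y [p2 [p3 ->]]]; exists (a :: p1), y, p2, p3.
Qed.

Lemma last_rev_belast (T : Type) (x : T) p : last (last x p) (rev (belast x p)) = x.
Proof. by case: p => //= y p; rewrite rev_cons last_rcons. Qed.

Section WeightedWalks.
Variables (T : finType) (e : rel T) (w : T -> T -> nat).

Fixpoint walk_weight (x : T) (p : seq T) : nat :=
  if p is y :: p' then w x y + walk_weight y p' else 0.

Lemma walk_weight_cat x p q :
  walk_weight x (p ++ q) = walk_weight x p + walk_weight (last x p) q.
Proof. by elim: p x => [|y p IHp] x //=; rewrite IHp addnA. Qed.

Lemma walk_weight_rcons x p y :
  walk_weight x (rcons p y) = walk_weight x p + w (last x p) y.
Proof. by rewrite -cats1 walk_weight_cat /= addn0. Qed.

Lemma seq_weight_cons x p : seq_weight w (x :: p) = walk_weight x p.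
Proof. by elim: p x => [|y p IHp] x; rewrite /seq_weight /= ?big_nil // big_cons -IHp. Qed.

Lemma cycle_weight_cons x q : cycle_weight w (x :: q) = walk_weight x (rcons q x).
Proof.
rewrite /cycle_weight rot1_cons; elim: q {1 3}x => [|y q IHq] z /=.
  by rewrite big_cons big_nil.
by rewrite big_cons IHq.
Qed.

Lemma odd_walk_weight_potential (pi : T -> bool) x p :
    path e x p -> {in x :: p &, forall a b, e a b -> odd (w a b) = pi a (+) pi b} ->
  odd (walk_weight x p) = pi x (+) pi (last x p).
Proof.
elim: p x => [|y p IHp] x /=; first by rewrite addbb.
move=> /andP[exy walk_p] pi_edges.
rewrite oddD pi_edges ?inE ?eqxx ?orbT // IHp // ?addbA ?addbK //.
by apply: sub_in2 pi_edges => v v_in; rewrite in_cons v_in orbT.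
Qed.

Lemma cycle_weight_even_potential (pi : T -> bool) c :
    cycle e c -> {in c &, forall a b, e a b -> odd (w a b) = pi a (+) pi b} ->
  ~~ odd (cycle_weight w c).
Proof.
case: c => [|x q] walk_c pi_edges; first by rewrite /cycle_weight big_nil.
rewrite cycle_weight_cons (odd_walk_weight_potential (pi := pi) walk_c) ?last_rcons ?addbb //.
by apply: sub_in2 pi_edges => v; rewrite inE mem_rcons inE orbA orbb.
Qed.

Lemma walk_weight_splice x p1 y p2 p3 :
  walk_weight x (p1 ++ y :: p2 ++ y :: p3) =
  walk_weight x (p1 ++ y :: p3) + walk_weight y (rcons p2 y).
Proof. by rewrite !walk_weight_cat /= walk_weight_cat walk_weight_rcons /=; lia. Qed.

Lemma path_splice x p1 y p2 p3 :
  path e x (p1 ++ y :: p2 ++ y :: p3) ->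
  path e x (p1 ++ y :: p3) /\ path e y (rcons p2 y).
Proof. by rewrite !cat_path /= cat_path rcons_path /= => /and5P[-> -> -> -> ->]. Qed.

Hypotheses (e_sym : symmetric e) (w_sym : weight_sym e w).

Lemma path_rev_belast x p : path e x p -> path e (last x p) (rev (belast x p)).
Proof. by rewrite rev_path; apply: sub_path => a b; rewrite e_sym. Qed.

Lemma walk_weight_rev x p :
  path e x p -> walk_weight (last x p) (rev (belast x p)) = walk_weight x p.
Proof.
elim: p x => [|y p IHp] x //= /andP[exy walk_p].
by rewrite rev_cons walk_weight_rcons IHp // last_rev_belast -w_sym // addnC.
Qed.

Hypothesis e_irr : irreflexive e.

Lemma closed_uniq_walk_cycle x q :
  path e x (rcons q x) -> uniq (rcons q x) -> odd (walk_weight x (rcons q x)) ->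
  is_cycle e (x :: q).
Proof.
rewrite rcons_uniq /is_cycle /= => walk_q /andP[-> ->]; rewrite walk_q !andbT.
case: q walk_q => [|y [|z q]] //=; first by rewrite e_irr.
by rewrite andbT addn0 => /andP[exy _]; rewrite w_sym // oddD addbb.
Qed.

Lemma odd_closed_walk_cycle x p :
  path e x p -> last x p = x -> odd (walk_weight x p) ->
  exists c, [/\ is_cycle e c, odd (cycle_weight w c) & cycle_weight w c <= walk_weight x p].
Proof.
have [n] := ubnP (size p); elim: n x p => // n IHn x p.
rewrite ltnS => size_p walk_p closed_p odd_p.
have [uniq_p | /split_not_uniq[p1 [y [p2 [p3 def_p]]]]] := boolP (uniq p).
  case/lastP: p size_p walk_p closed_p odd_p uniq_p => [|q z] //.
  rewrite last_rcons => _ walk_q z_x; subst z => odd_q uniq_q.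
  by exists (x :: q); rewrite cycle_weight_cons; split=> //; apply: closed_uniq_walk_cycle.
move: walk_p closed_p odd_p; rewrite def_p walk_weight_splice oddD !last_cat /= last_cat.
case/path_splice=> walkA walkB closed_p odd_p.
have closedA : last x (p1 ++ y :: p3) = x by rewrite last_cat.
have closedB : last y (rcons p2 y) = y by rewrite last_rcons.
have [sizeA sizeB] : size (p1 ++ y :: p3) < n /\ size (rcons p2 y) < n.
  by move: size_p; rewrite def_p !size_cat /= size_cat size_rcons /=; lia.
have [oddA | /negbTE evenA] := boolP (odd (walk_weight x (p1 ++ y :: p3))).
  have [c [cycle_c odd_c le_c]] := IHn _ _ sizeA walkA closedA oddA.
  by exists c; split=> //; rewrite (leq_trans le_c) ?leq_addr.
rewrite evenA in odd_p; have [c [cycle_c odd_c le_c]] := IHn _ _ sizeB walkB closedB odd_p.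
by exists c; split=> //; rewrite (leq_trans le_c) ?leq_addl.
Qed.

Variable g : nat.
Hypothesis odd_girth :
  forall c, is_cycle e c -> odd (cycle_weight w c) -> g <= cycle_weight w c.

Lemma short_closed_walk_even x p :
  path e x p -> last x p = x -> walk_weight x p < g -> ~~ odd (walk_weight x p).
Proof.
move=> walk_p closed_p short_p; apply/negP => /(odd_closed_walk_cycle walk_p closed_p).
case=> c [cycle_c /(odd_girth cycle_c) le_g le_c].
by move: short_p; rewrite ltnNge (leq_trans le_g le_c).
Qed.

Lemma edge_parity u a b pa pb :
  e a b -> path e a pa -> last a pa = u -> path e b pb -> last b pb = u ->
  w a b + walk_weight a pa + walk_weight b pb < g ->
  odd (w a b) = odd (walk_weight a pa) (+) odd (walk_weight b pb).
Proof.
move=> eab walk_a last_a walk_b last_b short.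
pose loop := b :: pb ++ rev (belast a pa).
have walk_loop : path e a loop.
  by rewrite /= eab cat_path walk_b last_b -last_a path_rev_belast.
have closed_loop : last a loop = a by rewrite /= last_cat last_b -last_a last_rev_belast.
have weight_loop : walk_weight a loop = w a b + walk_weight a pa + walk_weight b pb.
  by rewrite /= walk_weight_cat last_b -last_a walk_weight_rev // addnA addnAC.
have := short_closed_walk_even walk_loop closed_loop; rewrite weight_loop => /(_ short).
by rewrite !oddD; case: odd; case: odd; case: odd.
Qed.

End WeightedWalks.

Theorem lemma4p1 (k : nat) (T : finType) (e : rel T) (w : T -> T -> nat) :
  5 <= k ->
  simple_graph e ->
  weight_sym e w ->
  (forall x y, e x y -> w x y \in [:: 3; 4; 5]) ->
  (forall c, is_cycle e c -> odd (cycle_weight w c) -> 2 * k + 1 <= cycle_weight w c) ->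
  forall u : T, weighted_bipartite e w (in_wball e w u (k - 3)).
Proof.
move=> k_ge5 [e_sym e_irr] w_sym w_345 odd_girth u c /and3P[_ cycle_c _] c_in_ball.
pose reaches v p := [&& path e v p, last v p == u & walk_weight w v p <= k - 3].
have /fin_all_exists[f reaches_f] : forall v, exists p, v \in c -> reaches v p.
  move=> v; have [/c_in_ball[p [/and3P[walk_p _ last_p] le_p]] | _] := boolP (v \in c).
    by exists p => _; rewrite /reaches walk_p last_p -seq_weight_cons.
  by exists [::].
apply: (cycle_weight_even_potential (pi := fun v => odd (walk_weight w v (f v))) cycle_c) => a b.
move=> /reaches_f/and3P[walk_a /eqP last_a le_a] /reaches_f/and3P[walk_b /eqP last_b le_b] eab.
apply: (edge_parity e_sym w_sym e_irr odd_girth eab walk_a last_a walk_b last_b).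
(* Of [5 <= k] only [3 <= k] matters: it keeps [k - 3] from truncating. *)
have : w a b <= 5 by move: (w_345 a b eab); rewrite !inE => /or3P[] /eqP ->.
lia.
Qed.
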